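(* Let $K$ be a field, $f\colon R\to S$ a morphism of Zinbiel algebras, $N$ a positive integer, and $\Theta_t=\sum_{i=0}^N\theta_it^i$ a deformation of order $N$ of $f$. Then the obstruction class $\mathrm{Ob}_\Theta=(\mathrm{Ob}_R;\mathrm{Ob}_S;\mathrm{Ob}_f)\in C^3_{\mathrm{Zinb}}(f,f)$ is a $3$-cocycle, i.e. $d^3_f\,\mathrm{Ob}_\Theta=0$.
   Context: A Zinbiel algebra over $K$ is a $K$-vector space $R$ with bilinear product $x\cdot y$ (also written $m_R(x,y)$) satisfying $(x\cdot y)\cdot z=x\cdot(y\cdot z)+x\cdot(z\cdot y)$. A morphism $f\colon R\to S$ is a linear map with $f(x\cdot y)=f(x)\cdot f(y)$. $R$ is a bimodule over itself, $S$ over itself, and $S$ is an $R$-bimodule via $r\cdot s=f(r)\cdot s$, $s\cdot r=s\cdot f(r)$. For a bimodule $A$ over $R$ and $1\le n\le4$, $C^n_{\mathrm{Zinb}}(R,A)=\mathrm{Hom}_K(R^{\otimes n},A)$ with $(d^1\varphi)(x,y)=x\cdot\varphi(y)-\varphi(x\cdot y)+\varphi(x)\cdot y$, $(d^2\varphi)(x,y,z)=x\cdot(\varphi(y,z)+\varphi(z,y))-\varphi(x\cdot y,z)+\varphi(x,y\cdot z+z\cdot y)-\varphi(x,y)\cdot z$, $(d^3\varphi)(x,y,z,w)=x\cdot\{\varphi(y,z,w)-\varphi(z,w,y)+\varphi(z,y,w)-\varphi(w,z,y)\}-\varphi(x\cdot y,z,w)+\varphi(x,y\cdot z+z\cdot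 y,w)-\varphi(x,y,z\cdot w+w\cdot z)+\varphi(x,y,z)\cdot w$. The deformation complex: $C^0_{\mathrm{Zinb}}(R,S)=0$, $d^0=0$, $C^n_{\mathrm{Zinb}}(f,f)=C^n_{\mathrm{Zinb}}(R,R)\times C^n_{\mathrm{Zinb}}(S,S)\times C^{n-1}_{\mathrm{Zinb}}(R,S)$ ($1\le n\le4$), $d^i_f(\xi;\pi;\varphi)=(d^i\xi;d^i\pi;f\xi-\pi f-d^{i-1}\varphi)$ with $(f\xi)(x_1,\dots)=f(\xi(x_1,\dots))$, $(\pi f)(x_1,\dots)=\pi(f(x_1),\dots)$. A deformation of order $N$ of $f$ is $\Theta_t=\sum_{i=0}^N\theta_it^i$ with $\theta_0=(m_R;m_S;f)$ (so $m_{R,0}=m_R$, $m_{S,0}=m_S$, $f_0=f$) and $\theta_i=(m_{R,i};m_{S,i};f_i)\in C^2_{\mathrm{Zinb}}(f,f)$, such that for all $0\le n\le N$: for $*=R,S$ and all $x,y,z\in *$, $\sum_{l=0}^n m_{*,l}(m_{*,n-l}(x,y),z)=\sum_{l=0}^n m_{*,l}(x,m_{*,n-l}(y,z)+m_{*,n-l}(z,y))$; and for all $x,y\in R$, $\sum_{i=0}^n f_i(m_{R,n-i}(x,y))=\sum_{i+j+k=n}m_{S,i}(f_j(x),f_k(y))$ (indices $\ge0$). The obstruction class of such $\Theta_t$ is $\mathrm{Ob}_\Theta=(\mathrm{Ob}_R;\mathrm{Ob}_S;\mathrm{Ob}_f)$ where, for $*=R,S$ and $x,y,z\in *$, $\mathrm{Ob}_*(x,y,z)=\sum_{i=1}^N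 m_{*,i}(m_{*,N+1-i}(x,y),z)-\sum_{i=1}^N m_{*,i}(x,m_{*,N+1-i}(y,z)+m_{*,N+1-i}(z,y))$, and for $x,y\in R$, $\mathrm{Ob}_f(x,y)=\sum' m_{S,i}(f_j(x),f_k(y))-\sum_{i=1}^N f_i(m_{R,N+1-i}(x,y))$, where $\sum'$ runs over all triples of integers $i,j,k\ge0$ with $i+j+k=N+1$ and at least two of $i,j,k$ positive (equivalently, $i,j,k\le N$). *)

From HB Require Import structures.
From mathcomp Require Import all_boot all_order all_algebra.
Set Implicit Arguments. Unset Strict Implicit. Unset Printing Implicit Defensive.
Import GRing.Theory.
Local Open Scope ring_scope.

Section ZinbDefs.
Variable K : fieldType.

Definition klinear (U V : lmodType K) (g : U -> V) : Prop :=
  forall (a : K) (x y : U), g (a *: x + y) = a *: g x + g y.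

Definition kbilinear (U V W : lmodType K) (m : U -> V -> W) : Prop :=
  (forall x, klinear (m x)) /\ (forall y, klinear (fun x => m x y)).

Definition zinbiel_identity (R : lmodType K) (m : R -> R -> R) : Prop :=
  forall x y z, m (m x y) z = m x (m y z) + m x (m z y).

Definition zinbiel_algebra (R : lmodType K) (m : R -> R -> R) : Prop :=
  kbilinear m /\ zinbiel_identity m.

Definition zinbiel_morphism (R S : lmodType K) (mR : R -> R -> R)
  (mS : S -> S -> S) (f : R -> S) : Prop :=
  klinear f /\ forall x y, f (mR x y) = mS (f x) (f y).

(* Coboundaries d^2 and d^3 of C^*_Zinb(R, A), for an R-bimodule A given by
   the left action [l] and right action [r]. *)
Definition zd2 (R A : lmodType K) (mR : R -> R -> R) (l : R -> A -> A)
  (r : A -> R -> A) (phi : R -> R -> A) : R -> R -> R -> A :=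
  fun x y z => l x (phi y z + phi z y) - phi (mR x y) z
               + phi x (mR y z + mR z y) - r (phi x y) z.

Definition zd3 (R A : lmodType K) (mR : R -> R -> R) (l : R -> A -> A)
  (r : A -> R -> A) (phi : R -> R -> R -> A) : R -> R -> R -> R -> A :=
  fun x y z w =>
    l x (phi y z w - phi z w y + phi z y w - phi w z y)
    - phi (mR x y) z w + phi x (mR y z + mR z y) w
    - phi x y (mR z w + mR w z) + r (phi x y z) w.

Definition zinb_deformation (R S : lmodType K) (mR : R -> R -> R)
  (mS : S -> S -> S) (f : R -> S) (N : nat)
  (mRs : nat -> R -> R -> R) (mSs : nat -> S -> S -> S) (fs : nat -> R -> S)
  : Prop :=
  [/\ mRs 0%N = mR, mSs 0%N = mS & fs 0%N = f] /\
  [/\ (forall i, (i <= N)%N -> [/\ kbilinear (mRs i), kbilinear (mSs i)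
                                  & klinear (fs i)]),
      (forall n, (n <= N)%N -> forall x y z : R,
          \sum_(l < n.+1) mRs l (mRs (n - l)%N x y) z =
          \sum_(l < n.+1) mRs l x (mRs (n - l)%N y z + mRs (n - l)%N z y)),
      (forall n, (n <= N)%N -> forall x y z : S,
          \sum_(l < n.+1) mSs l (mSs (n - l)%N x y) z =
          \sum_(l < n.+1) mSs l x (mSs (n - l)%N y z + mSs (n - l)%N z y))
    & (forall n, (n <= N)%N -> forall x y : R,
          \sum_(i < n.+1) fs i (mRs (n - i)%N x y) =
          \sum_(i < n.+1) \sum_(j < n.+1) \sum_(k < n.+1 | (i + j + k == n)%N)
             mSs i (fs j x) (fs k y))].

Definition obs_alg (T : lmodType K) (ms : nat -> T -> T -> T) (N : nat)
  : T -> T -> T -> T :=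
  fun x y z =>
    \sum_(1 <= i < N.+1) ms i (ms (N.+1 - i)%N x y) z
    - \sum_(1 <= i < N.+1) ms i x (ms (N.+1 - i)%N y z + ms (N.+1 - i)%N z y).

Definition obs_mor (R S : lmodType K) (mRs : nat -> R -> R -> R)
  (mSs : nat -> S -> S -> S) (fs : nat -> R -> S) (N : nat) : R -> R -> S :=
  fun x y =>
    \sum_(i < N.+1) \sum_(j < N.+1) \sum_(k < N.+1 | (i + j + k == N.+1)%N)
        mSs i (fs j x) (fs k y)
    - \sum_(1 <= i < N.+1) fs i (mRs (N.+1 - i)%N x y).

End ZinbDefs.

(* A deformation of order N is a single product on power series: for series
   u, v : nat -> T, [series_conv m u v] is (sum_i m_i t^i)(u, v) computed
   coefficientwise, and [series_map f] applies sum_i f_i t^i.  The deformation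
   equations say that the Zinbiel associator
     Phi(u, v, w) = mu(mu(u, v), w) - mu(u, mu(v, w) + mu(w, v))
   of these products and the morphism defect D(u, v) = mu_S(F u, F v) - F(mu_R(u, v))
   are divisible by t^(N+1) on constant series, with t^(N+1)-coefficients Ob_R,
   Ob_S and Ob_f; since both maps are t-linear in each argument, the same holds
   on all series.  For any biadditive product one has d^3 Phi = 0 and
   F Phi_R - Phi_S F = d^2 D identically.  In the t^(N+1)-coefficient of these
   identities, a product with one factor divisible by t^(N+1) only sees the
   order-0 parts m_0, f_0 of the other factors, and the cocycle equations
   for (Ob_R; Ob_S; Ob_f) come out. *)

From HB Require Import structures.
From mathcomp Require Import all_boot all_order all_algebra.
From mathcomp Require Import boolp functions zify.
Import GRing.Theory.
Set Implicit Arguments. Unset Strict Implicit. Unset Printing Implicit Defensive.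
Local Open Scope ring_scope.

(* Proves an identity between signed sums of atoms of an abelian group by
   cancelling opposite pairs. *)
Ltac zmod_cancel :=
  apply/eqP; rewrite -subr_eq0; apply/eqP;
  rewrite ?(opprD, opprK, oppr0, addr0) -[LHS]addr0 -?addrA;
  repeat match goal with |- context [ - ?t ] =>
    rewrite ?(addrCA _ (- t)) ?(addrCA _ t) addNKr end; done.

Section AdditiveMorph.
Variables (U V : zmodType) (g : U -> V).
Hypothesis gD : {morph g : x y / x + y}.

Lemma morph_add0 : g 0 = 0.
Proof. by apply: (addrI (g 0)); rewrite -gD !addr0. Qed.

Lemma morph_add_opp : {morph g : x / - x}.
Proof. by move=> x; apply: (addIr (g x)); rewrite -gD !addNr morph_add0. Qed.
End AdditiveMorph.

Lemma klinear_morph_add (K : fieldType) (U V : lmodType K) (g : U -> V) :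
  klinear g -> {morph g : x y / x + y}.
Proof. by move=> gl x y; rewrite -{1}[x]scale1r gl scale1r. Qed.

Definition zinb_assoc (V : zmodType) (mu : V -> V -> V) (x y z : V) : V :=
  mu (mu x y) z - mu x (mu y z + mu z y).

Definition morph_defect (U V : zmodType) (muU : U -> U -> U) (muV : V -> V -> V)
  (F : U -> V) (x y : U) : V :=
  muV (F x) (F y) - F (muU x y).

Section CoboundaryIdentities.
Variable K : fieldType.

Lemma zd3_zinb_assoc (V : lmodType K) (mu : V -> V -> V) :
  (forall b, {morph mu^~ b : x y / x + y}) -> (forall a, {morph mu a : x y / x + y}) ->
  forall x y z w, zd3 mu mu mu (zinb_assoc mu) x y z w = 0.
Proof.
move=> muDl muDr x y z w.
have muNl b := morph_add_opp (muDl b); have muNr a := morph_add_opp (muDr a).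
rewrite /zd3 /zinb_assoc !(muDl, muNl, muDr, muNr); zmod_cancel.
Qed.

Lemma zd2_morph_defect (U V : lmodType K) (muU : U -> U -> U) (muV : V -> V -> V)
    (F : U -> V) :
  (forall b, {morph muV^~ b : x y / x + y}) -> (forall a, {morph muV a : x y / x + y}) ->
  {morph F : x y / x + y} ->
  forall x y z, F (zinb_assoc muU x y z) - zinb_assoc muV (F x) (F y) (F z)
    - zd2 muU (fun r s => muV (F r) s) (fun s r => muV s (F r))
        (morph_defect muU muV F) x y z = 0.
Proof.
move=> muDl muDr FD x y z.
have muNl b := morph_add_opp (muDl b); have muNr a := morph_add_opp (muDr a).
have FN := morph_add_opp FD.
rewrite /zd2 /zinb_assoc /morph_defect !(FN, FD, muDl, muNl, muDr, muNr); zmod_cancel.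
Qed.
End CoboundaryIdentities.

Lemma sum_ord_interior (V : nmodType) N (F : nat -> V) :
  F 0%N = 0 -> F N.+1 = 0 -> \sum_(i < N.+2) F i = \sum_(1 <= i < N.+1) F i.
Proof.
move=> F0 FN; rewrite -(big_mkord xpredT) big_nat_recr //= FN addr0.
by rewrite big_ltn // F0 add0r.
Qed.

Lemma sum_compositions3 (V : nmodType) n (G : nat -> nat -> nat -> V) :
  \sum_(i < n.+1) \sum_(j < (n - i).+1) G i j (n - i - j)%N =
  \sum_(i < n.+1) \sum_(j < n.+1) \sum_(k < n.+1 | (i + j + k == n)%N) G i j k.
Proof.
apply: eq_bigr => i _; have le_in : (i <= n)%N := ltn_ord i.
rewrite (big_ord_widen n.+1 (fun j => G i j (n - i - j)%N)) ?ltnS ?leq_subr // big_mkcond.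
apply: eq_bigr => j _.
rewrite (eq_bigl (fun k : 'I_n.+1 => (j <= n - i)%N && (k == n - i - j :> nat)%N))
  => [|k].
  rewrite (big_ord1_cond_eq _ (G i j) (fun=> (j <= n - i)%N)) !ltnS.
  by have -> : (n - i - j <= n)%N by lia.
by apply/idP/idP; lia.
Qed.

Lemma sum_compositions3_shrink (V : nmodType) n c (G : nat -> nat -> nat -> V) :
  (forall i j k, [|| i == n, j == n | k == n] -> G i j k = 0) ->
  \sum_(i < n.+1) \sum_(j < n.+1) \sum_(k < n.+1 | (i + j + k == c)%N) G i j k =
  \sum_(i < n) \sum_(j < n) \sum_(k < n | (i + j + k == c)%N) G i j k.
Proof.
move=> G0; rewrite big_ord_recr /= [X in _ + X]big1 ?addr0 => [|j _]; last first.
  by apply: big1 => k _; rewrite G0 ?eqxx.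
apply: eq_bigr => i _.
rewrite big_ord_recr /= [X in _ + X]big1 ?addr0 => [|k _]; last first.
  by rewrite G0 ?eqxx ?orbT.
apply: eq_bigr => j _; rewrite big_mkcond big_ord_recr /= G0 ?eqxx ?orbT //.
by rewrite if_same addr0 -big_mkcond.
Qed.

(* [u : nat -> T] stands for sum_n u n t^n: [series_shift] is multiplication
   by t and [tpow_dvd k u] says that t^k divides u. *)
Section Series.
Variable T : zmodType.
Implicit Types (u v : nat -> T) (a : T).

Definition series_const a : nat -> T := fun n => if n is 0 then a else 0.
Definition series_shift u : nat -> T := fun n => if n is n'.+1 then u n' else 0.
Definition tpow_dvd k u := forall n, (n < k)%N -> u n = 0.

Lemma series_addE u v n : (u + v) n = u n + v n. Proof. by []. Qed.
Lemma series_oppE u n : (- u) n = - u n. Proof. by []. Qed.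

Lemma series_const_gt0 a n : (0 < n)%N -> series_const a n = 0.
Proof. by case: n. Qed.

Lemma series_shiftD : {morph series_shift : u v / u + v}.
Proof. by move=> u v; apply/funext => -[|n]; rewrite series_addE ?addr0. Qed.

Lemma series_decomp u : u = series_const (u 0%N) + series_shift (fun n => u n.+1).
Proof. by apply/funext => -[|n]; rewrite series_addE ?addr0 ?add0r. Qed.

Lemma iter_series_shiftE k u n :
  iter k series_shift u n = if (k <= n)%N then u (n - k)%N else 0.
Proof. by elim: k n => [|k IH] [|n] //=; rewrite ?subn0 ?IH. Qed.

Lemma tpow_dvd_iter_shift k u :
  tpow_dvd k u -> u = iter k series_shift (fun n => u (n + k)%N).
Proof.
move=> uk; apply/funext => n; rewrite iter_series_shiftE.
by case: leqP => [kn | /uk //]; rewrite subnK.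
Qed.

Lemma tpow_dvdD k u v : tpow_dvd k u -> tpow_dvd k v -> tpow_dvd k (u + v).
Proof. by move=> uk vk n nk; rewrite series_addE uk // vk // addr0. Qed.

Lemma tpow_dvdN k u : tpow_dvd k u -> tpow_dvd k (- u).
Proof. by move=> uk n nk; rewrite series_oppE uk // oppr0. Qed.
End Series.

Arguments series_shift {T}.

Definition tlinear (A B : zmodType) (G : (nat -> A) -> nat -> B) :=
  {morph G : u v / u + v} /\ forall u, G (series_shift u) = series_shift (G u).

Lemma tlinear_coef_tpow_dvd (A B : zmodType) (G : (nat -> A) -> nat -> B) k u :
  tlinear G -> tpow_dvd k u -> G u k = G (fun n => u (n + k)%N) 0%N.
Proof.
move=> [_ Gsh] /tpow_dvd_iter_shift {1}->.
have -> : forall j w, G (iter j series_shift w) = iter j series_shift (G w).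
  by elim=> //= j IH w; rewrite Gsh IH.
by rewrite iter_series_shiftE leqnn subnn.
Qed.

Lemma tlinear_const_coef (A B : zmodType) (G : (nat -> A) -> nat -> B) k :
  tlinear G -> (forall a, tpow_dvd k (G (series_const a))) ->
  forall u, tpow_dvd k (G u) /\ G u k = G (series_const (u 0%N)) k.
Proof.
move=> [GD Gsh] Gk.
have Gdecomp u n : G u n =
    G (series_const (u 0%N)) n + series_shift (G (fun n => u n.+1)) n.
  by rewrite {1}(series_decomp u) GD Gsh.
have Gdvd u : tpow_dvd k (G u).
  move=> n; elim: n u => [|n IH] u nk; rewrite Gdecomp Gk //= ?addr0 // IH ?addr0 //.
  exact: ltnW.
split=> //; rewrite Gdecomp; case: k Gk Gdvd => [|k] _ Gdvd /=; first by rewrite addr0.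
by rewrite (Gdvd _ k) ?addr0.
Qed.

Lemma tlinear2_const_coef (A B C : zmodType)
    (G : (nat -> A) -> (nat -> B) -> nat -> C) k :
  (forall v, tlinear (G^~ v)) -> (forall u, tlinear (G u)) ->
  (forall a b, tpow_dvd k (G (series_const a) (series_const b))) ->
  forall u v, tpow_dvd k (G u v) /\
    G u v k = G (series_const (u 0%N)) (series_const (v 0%N)) k.
Proof.
move=> Gl Gr Gk u v.
have Gc a := tlinear_const_coef (Gr (series_const a)) (Gk a) v.
have [Gu ->] := tlinear_const_coef (Gl v) (fun a => (Gc a).1) u.
by rewrite (Gc _).2.
Qed.

Lemma tlinear3_const_coef (A B C D : zmodType)
    (G : (nat -> A) -> (nat -> B) -> (nat -> C) -> nat -> D) k :
  (forall v w, tlinear (fun u => G u v w)) -> (forall u w, tlinear (fun v => G u v w)) ->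
  (forall u v, tlinear (G u v)) ->
  (forall a b c, tpow_dvd k (G (series_const a) (series_const b) (series_const c))) ->
  forall u v w, tpow_dvd k (G u v w) /\ G u v w k =
    G (series_const (u 0%N)) (series_const (v 0%N)) (series_const (w 0%N)) k.
Proof.
move=> G1 G2 G3 Gk u v w.
have Gc a := tlinear2_const_coef (fun w => G2 (series_const a) w)
  (G3 (series_const a)) (Gk a) v w.
have [Gu ->] := tlinear_const_coef (G1 v w) (fun a => (Gc a).1) u.
by rewrite (Gc _).2.
Qed.

Section SeriesConv.
Variables (T : zmodType) (m : nat -> T -> T -> T).
Hypothesis mDl : forall i b, {morph m i ^~ b : x y / x + y}.
Hypothesis mDr : forall i a, {morph m i a : x y / x + y}.

Definition series_conv (u v : nat -> T) : nat -> T := fun n =>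
  \sum_(i < n.+1) \sum_(j < (n - i).+1) m i (u j) (v (n - i - j)%N).

Let m0l i b : m i 0 b = 0 := morph_add0 (mDl i b).
Let m0r i a : m i a 0 = 0 := morph_add0 (mDr i a).

Lemma series_conv_tlinearl v : tlinear (series_conv^~ v).
Proof.
split=> [u1 u2 | u]; apply/funext => n.
  rewrite series_addE /series_conv -big_split; apply: eq_bigr => i _.
  by rewrite -big_split; apply: eq_bigr => j _; rewrite series_addE mDl.
case: n => [|n]; first by rewrite /series_conv !big_ord1 m0l.
rewrite /series_conv /= big_ord_recr /= subnn big_ord1 m0l addr0.
apply: eq_bigr => i _; rewrite (subSn (ltn_ord i : (i <= n)%N)) big_ord_recl /= m0l add0r.
by apply: eq_bigr => j _; rewrite subSS.
Qed.

Lemma series_conv_tlinearr u : tlinear (series_conv u).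
Proof.
split=> [v1 v2 | v]; apply/funext => n.
  rewrite series_addE /series_conv -big_split; apply: eq_bigr => i _.
  by rewrite -big_split; apply: eq_bigr => j _; rewrite series_addE mDr.
case: n => [|n]; first by rewrite /series_conv !big_ord1 m0r.
rewrite /series_conv /= big_ord_recr /= subnn big_ord1 m0r addr0.
apply: eq_bigr => i _; rewrite (subSn (ltn_ord i : (i <= n)%N)) big_ord_recr /=.
rewrite subnn m0r addr0; apply: eq_bigr => j _.
by rewrite (subSn (ltn_ord j : (j <= n - i)%N)).
Qed.

Lemma series_conv_coef0 u v : series_conv u v 0%N = m 0 (u 0%N) (v 0%N).
Proof. by rewrite /series_conv !big_ord1. Qed.

Lemma series_conv_constl a v n :
  series_conv (series_const a) v n = \sum_(i < n.+1) m i a (v (n - i)%N).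
Proof.
by apply: eq_bigr => i _; rewrite big_ord_recl subn0 big1 ?addr0 // => j _; rewrite m0l.
Qed.

Lemma series_conv_constr u b n :
  series_conv u (series_const b) n = \sum_(i < n.+1) m i (u (n - i)%N) b.
Proof.
apply: eq_bigr => i _; rewrite big_ord_recr /= subnn big1 ?add0r // => j _.
by rewrite series_const_gt0 ?m0r // subn_gt0.
Qed.

Lemma series_conv_const a b n :
  series_conv (series_const a) (series_const b) n = m n a b.
Proof.
rewrite series_conv_constl big_ord_recr /= subnn big1 ?add0r // => i _.
by rewrite series_const_gt0 ?m0r // subn_gt0.
Qed.

Lemma series_conv_tpow_dvdl k u v :
  tpow_dvd k u -> series_conv u v k = m 0 (u k) (v 0%N).
Proof.
move=> uk; rewrite (tlinear_coef_tpow_dvd (series_conv_tlinearl v) uk).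
exact: series_conv_coef0.
Qed.

Lemma series_conv_tpow_dvdr k u v :
  tpow_dvd k v -> series_conv u v k = m 0 (u 0%N) (v k).
Proof.
move=> vk; rewrite (tlinear_coef_tpow_dvd (series_conv_tlinearr u) vk).
exact: series_conv_coef0.
Qed.

Lemma zinb_assoc_conv_const a b c n :
  zinb_assoc series_conv (series_const a) (series_const b) (series_const c) n =
  \sum_(i < n.+1) m i (m (n - i)%N a b) c
  - \sum_(i < n.+1) m i a (m (n - i)%N b c + m (n - i)%N c b).
Proof.
rewrite /zinb_assoc series_addE series_oppE series_conv_constr series_conv_constl.
by congr (_ - _); apply: eq_bigr => i _; rewrite ?series_addE !series_conv_const.
Qed.
End SeriesConv.

Section SeriesMap.
Variables (A B : zmodType) (f : nat -> A -> B).
Hypothesis fD : forall i, {morph f i : x y / x + y}.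

Definition series_map (u : nat -> A) : nat -> B := fun n =>
  \sum_(i < n.+1) f i (u (n - i)%N).

Lemma series_map_tlinear : tlinear series_map.
Proof.
split=> [u1 u2 | u]; apply/funext => n.
  by rewrite series_addE /series_map -big_split; apply: eq_bigr => i _; rewrite fD.
case: n => [|n]; first by rewrite /series_map big_ord1 (morph_add0 (fD _)).
rewrite /series_map /= big_ord_recr /= subnn /= (morph_add0 (fD _)) addr0.
by apply: eq_bigr => i _; rewrite (subSn (ltn_ord i : (i <= n)%N)).
Qed.

Lemma series_map_coef0 u : series_map u 0%N = f 0 (u 0%N).
Proof. by rewrite /series_map big_ord1. Qed.

Lemma series_map_const a n : series_map (series_const a) n = f n a.
Proof.
rewrite /series_map big_ord_recr /= subnn big1 ?add0r // => i _.
by rewrite series_const_gt0 ?(morph_add0 (fD _)) // subn_gt0.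
Qed.

Lemma series_map_tpow_dvd k u : tpow_dvd k u -> series_map u k = f 0 (u k).
Proof.
by move=> uk; rewrite (tlinear_coef_tpow_dvd series_map_tlinear uk) series_map_coef0.
Qed.
End SeriesMap.

Lemma morph_defect_conv_const (A B : zmodType) (mA : nat -> A -> A -> A)
    (mB : nat -> B -> B -> B) (f : nat -> A -> B)
    (mADl : forall i b, {morph mA i ^~ b : x y / x + y})
    (mADr : forall i a, {morph mA i a : x y / x + y})
    (fD : forall i, {morph f i : x y / x + y}) a b n :
  morph_defect (series_conv mA) (series_conv mB) (series_map f)
    (series_const a) (series_const b) n =
  \sum_(i < n.+1) \sum_(j < n.+1) \sum_(k < n.+1 | (i + j + k == n)%N)
    mB i (f j a) (f k b)
  - \sum_(i < n.+1) f i (mA (n - i)%N a b).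
Proof.
have Fc c : series_map f (series_const c) = fun p => f p c.
  by apply/funext => p; rewrite series_map_const.
rewrite /morph_defect series_addE series_oppE !Fc.
rewrite -(sum_compositions3 n (fun i j k => mB i (f j a) (f k b))).
by congr (_ - _); apply: eq_bigr => i _; rewrite ?series_conv_const.
Qed.

Section TLinearOperations.
Variables (A B : zmodType) (muA : (nat -> A) -> (nat -> A) -> nat -> A).
Variables (muB : (nat -> B) -> (nat -> B) -> nat -> B) (F : (nat -> A) -> nat -> B).
Hypothesis muA_linl : forall v, tlinear (muA^~ v).
Hypothesis muA_linr : forall u, tlinear (muA u).
Hypothesis muB_linl : forall v, tlinear (muB^~ v).
Hypothesis muB_linr : forall u, tlinear (muB u).
Hypothesis F_lin : tlinear F.

Let shiftNA := morph_add_opp (@series_shiftD A).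
Let shiftNB := morph_add_opp (@series_shiftD B).

Lemma zinb_assoc_tlinear :
  [/\ forall v w, tlinear (fun u => zinb_assoc muA u v w),
      forall u w, tlinear (fun v => zinb_assoc muA u v w)
    & forall u v, tlinear (zinb_assoc muA u v)].
Proof.
have muDl v := (muA_linl v).1; have muDr u := (muA_linr u).1.
have muNl v := morph_add_opp (muDl v); have muNr u := morph_add_opp (muDr u).
have muSl v := (muA_linl v).2; have muSr u := (muA_linr u).2.
split=> [v w | u w | u v]; split=> [x y | x]; rewrite /zinb_assoc;
  rewrite ?(muDl, muNl, muDr, muNr); try zmod_cancel;
  by rewrite !(muSl, muSr) -?series_shiftD ?(muSl, muSr) -shiftNA -series_shiftD.
Qed.

Lemma morph_defect_tlinear :
  (forall v, tlinear (morph_defect muA muB F ^~ v)) /\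
  (forall u, tlinear (morph_defect muA muB F u)).
Proof.
have [FD FS] := F_lin; have FN := morph_add_opp FD.
have muDl v := (muA_linl v).1; have muDr u := (muA_linr u).1.
have muSl v := (muA_linl v).2; have muSr u := (muA_linr u).2.
have nuDl v := (muB_linl v).1; have nuDr u := (muB_linr u).1.
have nuNl v := morph_add_opp (nuDl v); have nuNr u := morph_add_opp (nuDr u).
have nuSl v := (muB_linl v).2; have nuSr u := (muB_linr u).2.
split=> [v | u]; split=> [x y | x]; rewrite /morph_defect;
  rewrite ?(FD, FN, muDl, muDr, nuDl, nuNl, nuDr, nuNr); try zmod_cancel;
  by rewrite !(FS, muSl, muSr, nuSl, nuSr) -shiftNB -series_shiftD.
Qed.
End TLinearOperations.

Section LeadingCoefficient.
Variable K : fieldType.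

Lemma zd3_series_conv_coef (T : lmodType K) (m : nat -> T -> T -> T)
    (mDl : forall i b, {morph m i ^~ b : x y / x + y})
    (mDr : forall i a, {morph m i a : x y / x + y})
    (Phi : (nat -> T) -> (nat -> T) -> (nat -> T) -> nat -> T)
    (Ob : T -> T -> T -> T) k :
  (forall u v w, tpow_dvd k (Phi u v w) /\ Phi u v w k = Ob (u 0%N) (v 0%N) (w 0%N)) ->
  forall x y z s, zd3 (series_conv m) (series_conv m) (series_conv m) Phi x y z s k =
    zd3 (m 0) (m 0) (m 0) Ob (x 0%N) (y 0%N) (z 0%N) (s 0%N).
Proof.
move=> PhiE x y z s; have Phik u v w := (PhiE u v w).1.
have Phik4 : tpow_dvd k (Phi y z s - Phi z s y + Phi z y s - Phi s z y).
  by do ![apply: tpow_dvdD | apply: tpow_dvdN | apply: Phik].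
rewrite /zd3 !(series_addE, series_oppE) (series_conv_tpow_dvdr mDr _ Phik4).
rewrite (series_conv_tpow_dvdl mDl _ (Phik x y z)) !(series_addE, series_oppE).
by rewrite !(PhiE _ _ _).2 !series_addE !series_conv_coef0.
Qed.

Lemma zd2_series_conv_coef (R S : lmodType K) (mR : nat -> R -> R -> R)
    (mS : nat -> S -> S -> S) (f : nat -> R -> S)
    (mSDl : forall i b, {morph mS i ^~ b : x y / x + y})
    (mSDr : forall i a, {morph mS i a : x y / x + y})
    (Dv : (nat -> R) -> (nat -> R) -> nat -> S) (Od : R -> R -> S) k :
  (forall u v, tpow_dvd k (Dv u v) /\ Dv u v k = Od (u 0%N) (v 0%N)) ->
  forall x y z, zd2 (series_conv mR) (fun r s => series_conv mS (series_map f r) s)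
      (fun s r => series_conv mS s (series_map f r)) Dv x y z k =
    zd2 (mR 0) (fun r s => mS 0 (f 0 r) s) (fun s r => mS 0 s (f 0 r)) Od
      (x 0%N) (y 0%N) (z 0%N).
Proof.
move=> DvE x y z; have Dvk u v := (DvE u v).1.
rewrite /zd2 !(series_addE, series_oppE).
rewrite (series_conv_tpow_dvdr mSDr _ (tpow_dvdD (Dvk y z) (Dvk z y))).
rewrite (series_conv_tpow_dvdl mSDl _ (Dvk x y)) series_addE !(DvE _ _).2.
by rewrite !series_addE !series_conv_coef0 !series_map_coef0.
Qed.
End LeadingCoefficient.

(* Components of order > N are not part of a deformation of order N.  Replacing
   them by 0 makes every component (bi)linear and removes the terms i = 0 and
   i = N+1 from the t^(N+1)-coefficients. *)
Section Truncation.
Variables (V : zmodType) (N : nat) (s : nat -> V).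

Definition trunc_at i := if (i <= N)%N then s i else 0.

Lemma trunc_at_le i : (i <= N)%N -> trunc_at i = s i.
Proof. by rewrite /trunc_at => ->. Qed.
End Truncation.

Lemma trunc_at_bilinear (K : fieldType) (T : lmodType K) N (ms : nat -> T -> T -> T) :
  (forall i, (i <= N)%N -> kbilinear (ms i)) ->
  (forall i b, {morph trunc_at N ms i ^~ b : x y / x + y}) /\
  (forall i a, {morph trunc_at N ms i a : x y / x + y}).
Proof.
move=> msb; split=> i c x y; rewrite /trunc_at; case: ifP => iN.
- exact: (klinear_morph_add ((msb i iN).2 c)).
- exact: (esym (addr0 0)).
- exact: (klinear_morph_add ((msb i iN).1 c)).
- exact: (esym (addr0 0)).
Qed.

Lemma trunc_at_linear (K : fieldType) (R S : lmodType K) N (fs : nat -> R -> S) :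
  (forall i, (i <= N)%N -> klinear (fs i)) ->
  forall i, {morph trunc_at N fs i : x y / x + y}.
Proof.
move=> fl i x y; rewrite /trunc_at; case: ifP => iN; last exact: (esym (addr0 0)).
exact: (klinear_morph_add (fl i iN)).
Qed.

Section AlgebraObstruction.
Variables (K : fieldType) (T : lmodType K) (ms : nat -> T -> T -> T) (N : nat).
Hypothesis ms_bilinear : forall i, (i <= N)%N -> kbilinear (ms i).
Hypothesis ms_deformation : forall n, (n <= N)%N -> forall x y z : T,
  \sum_(l < n.+1) ms l (ms (n - l)%N x y) z =
  \sum_(l < n.+1) ms l x (ms (n - l)%N y z + ms (n - l)%N z y).

Let m := trunc_at N ms.
Let mDl : forall i b, {morph m i ^~ b : x y / x + y} :=
  (trunc_at_bilinear ms_bilinear).1.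
Let mDr : forall i a, {morph m i a : x y / x + y} :=
  (trunc_at_bilinear ms_bilinear).2.

Let mE i : (i <= N)%N -> m i = ms i := @trunc_at_le _ N ms i.

Lemma trunc_at_deformation n : (n <= N)%N -> forall x y z : T,
  \sum_(l < n.+1) m l (m (n - l)%N x y) z =
  \sum_(l < n.+1) m l x (m (n - l)%N y z + m (n - l)%N z y).
Proof.
move=> nN x y z; have mEn (i : 'I_n.+1) : m i = ms i /\ m (n - i)%N = ms (n - i)%N.
  by split; apply: mE; have := ltn_ord i; lia.
rewrite (eq_bigr (fun i : 'I_n.+1 => ms i (ms (n - i)%N x y) z)) => [|i _]; last first.
  by case: (mEn i) => -> ->.
rewrite [RHS](eq_bigr (fun i : 'I_n.+1 => ms i x (ms (n - i)%N y z + ms (n - i)%N z y))).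
  exact: ms_deformation.
by move=> i _; case: (mEn i) => -> ->.
Qed.

Lemma zinb_assoc_series_const a b c :
  let Phi := zinb_assoc (series_conv m)
    (series_const a) (series_const b) (series_const c) in
  tpow_dvd N.+1 Phi /\ Phi N.+1 = obs_alg ms N a b c.
Proof.
have m_top x y : m N.+1 x y = 0 by rewrite /m /trunc_at ltnn.
split=> [n nN | ]; rewrite zinb_assoc_conv_const //.
  by rewrite trunc_at_deformation ?subrr.
rewrite /obs_alg (@sum_ord_interior _ _ (fun i => m i (m (N.+1 - i)%N a b) c)) /=;
  first last.
- by rewrite m_top.
- by rewrite subn0 m_top (morph_add0 (mDl _ _)).
rewrite (@sum_ord_interior _ _
  (fun i => m i a (m (N.+1 - i)%N b c + m (N.+1 - i)%N c b))) /=; first last.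
- by rewrite m_top.
- by rewrite subn0 !m_top addr0 (morph_add0 (mDr _ _)).
by congr (_ - _); apply: eq_big_nat => i /andP[i1 iN]; rewrite !mE //; lia.
Qed.

Lemma zinb_assoc_series_leading u v w :
  let Phi := zinb_assoc (series_conv m) u v w in
  tpow_dvd N.+1 Phi /\ Phi N.+1 = obs_alg ms N (u 0%N) (v 0%N) (w 0%N).
Proof.
rewrite /=.
have [Phi1 Phi2 Phi3] :=
  zinb_assoc_tlinear (series_conv_tlinearl mDl) (series_conv_tlinearr mDr).
have [Phik ->] := tlinear3_const_coef Phi1 Phi2 Phi3
  (fun a b c => (zinb_assoc_series_const a b c).1) u v w.
by rewrite (zinb_assoc_series_const _ _ _).2.
Qed.

Lemma zd3_obs_alg x y z w : zd3 (ms 0) (ms 0) (ms 0) (obs_alg ms N) x y z w = 0.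
Proof.
have muDl v := (series_conv_tlinearl mDl v).1.
have muDr u := (series_conv_tlinearr mDr u).1.
have := zd3_series_conv_coef mDl mDr zinb_assoc_series_leading (series_const x)
  (series_const y) (series_const z) (series_const w).
by rewrite zd3_zinb_assoc // => <-.
Qed.
End AlgebraObstruction.

Section MorphismObstruction.
Variables (K : fieldType) (R S : lmodType K) (N : nat).
Variables (mRs : nat -> R -> R -> R) (mSs : nat -> S -> S -> S) (fs : nat -> R -> S).
Hypothesis mR_bilinear : forall i, (i <= N)%N -> kbilinear (mRs i).
Hypothesis mS_bilinear : forall i, (i <= N)%N -> kbilinear (mSs i).
Hypothesis f_linear : forall i, (i <= N)%N -> klinear (fs i).
Hypothesis mR_deformation : forall n, (n <= N)%N -> forall x y z : R,
  \sum_(l < n.+1) mRs l (mRs (n - l)%N x y) z =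
  \sum_(l < n.+1) mRs l x (mRs (n - l)%N y z + mRs (n - l)%N z y).
Hypothesis mS_deformation : forall n, (n <= N)%N -> forall x y z : S,
  \sum_(l < n.+1) mSs l (mSs (n - l)%N x y) z =
  \sum_(l < n.+1) mSs l x (mSs (n - l)%N y z + mSs (n - l)%N z y).
Hypothesis f_deformation : forall n, (n <= N)%N -> forall x y : R,
  \sum_(i < n.+1) fs i (mRs (n - i)%N x y) =
  \sum_(i < n.+1) \sum_(j < n.+1) \sum_(k < n.+1 | (i + j + k == n)%N)
     mSs i (fs j x) (fs k y).

Let mR := trunc_at N mRs.
Let mS := trunc_at N mSs.
Let f := trunc_at N fs.
Let mRDl : forall i b, {morph mR i ^~ b : x y / x + y} :=
  (trunc_at_bilinear mR_bilinear).1.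
Let mRDr : forall i a, {morph mR i a : x y / x + y} :=
  (trunc_at_bilinear mR_bilinear).2.
Let mSDl : forall i b, {morph mS i ^~ b : x y / x + y} :=
  (trunc_at_bilinear mS_bilinear).1.
Let mSDr : forall i a, {morph mS i a : x y / x + y} :=
  (trunc_at_bilinear mS_bilinear).2.
Let fD : forall i, {morph f i : x y / x + y} := trunc_at_linear f_linear.

Lemma morph_defect_series_const a b :
  let D := morph_defect (series_conv mR) (series_conv mS) (series_map f)
    (series_const a) (series_const b) in
  tpow_dvd N.+1 D /\ D N.+1 = obs_mor mRs mSs fs N a b.
Proof.
split=> [n nN | ]; rewrite (morph_defect_conv_const mS mRDl mRDr fD).
  have trE (V : zmodType) (s : nat -> V) (i : 'I_n.+1) : trunc_at N s i = s i.
    by apply: trunc_at_le; have := ltn_ord i; lia.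
  apply/eqP; rewrite subr_eq0; apply/eqP.
  rewrite [RHS](eq_bigr (fun i : 'I_n.+1 => fs i (mRs (n - i)%N a b))) => [|i _].
    rewrite f_deformation //; apply: eq_bigr => i _; apply: eq_bigr => j _.
    by apply: eq_bigr => k _; rewrite /mS /f !trE.
  by rewrite /f /mR trE trunc_at_le // (leq_trans (leq_subr _ _)).
have mR_top x y : mR N.+1 x y = 0 by rewrite /mR /trunc_at ltnn.
have mS_top x y : mS N.+1 x y = 0 by rewrite /mS /trunc_at ltnn.
have f_top x : f N.+1 x = 0 by rewrite /f /trunc_at ltnn.
have trE (V : zmodType) (s : nat -> V) (i : 'I_N.+1) : trunc_at N s i = s i.
  by apply: trunc_at_le; rewrite -ltnS.
rewrite /obs_mor
  (@sum_compositions3_shrink _ N.+1 N.+1 (fun i j k => mS i (f j a) (f k b))).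
  rewrite (@sum_ord_interior _ _ (fun i => f i (mR (N.+1 - i) a b))) /=; first last.
  - exact: f_top.
  - by rewrite subn0 mR_top (morph_add0 (fD _)).
  congr (_ - _).
    apply: eq_bigr => i _; apply: eq_bigr => j _; apply: eq_bigr => k _.
    by rewrite /mS /f !trE.
  apply: eq_big_nat => i /andP[i1 iN].
  by rewrite /f /mR !trunc_at_le //; lia.
move=> i j k /or3P[] /eqP ->.
- exact: mS_top.
- by rewrite f_top (morph_add0 (mSDl _ _)).
- by rewrite f_top (morph_add0 (mSDr _ _)).
Qed.

Lemma zd2_obs_mor x y z :
  fs 0 (obs_alg mRs N x y z) - obs_alg mSs N (fs 0 x) (fs 0 y) (fs 0 z)
  - zd2 (mRs 0) (fun r s => mSs 0 (fs 0 r) s) (fun s r => mSs 0 s (fs 0 r))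
      (obs_mor mRs mSs fs N) x y z = 0.
Proof.
have [Dl Dr] := morph_defect_tlinear (series_conv_tlinearl mRDl)
  (series_conv_tlinearr mRDr) (series_conv_tlinearl mSDl) (series_conv_tlinearr mSDr)
  (series_map_tlinear fD).
pose D := morph_defect (series_conv mR) (series_conv mS) (series_map f).
have DvE u v : tpow_dvd N.+1 (D u v) /\ D u v N.+1 = obs_mor mRs mSs fs N (u 0%N) (v 0%N).
  rewrite /D; have [Dk ->] := tlinear2_const_coef Dl Dr
    (fun a b => (morph_defect_series_const a b).1) u v.
  by rewrite (morph_defect_series_const _ _).2.
have [PhiR_dvd PhiR_top] := zinb_assoc_series_leading mR_bilinear mR_deformation
  (series_const x) (series_const y) (series_const z).
have PhiS_top u v w := (zinb_assoc_series_leading mS_bilinear mS_deformation u v w).2.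
have muDl v := (series_conv_tlinearl mSDl v).1.
have muDr u := (series_conv_tlinearr mSDr u).1.
have := zd2_morph_defect (series_conv mR) muDl muDr (series_map_tlinear fD).1
  (series_const x) (series_const y) (series_const z).
move/(congr1 (fun s => s N.+1)); rewrite !(series_addE, series_oppE).
rewrite (series_map_tpow_dvd fD PhiR_dvd) PhiR_top PhiS_top !series_map_coef0.
by rewrite (zd2_series_conv_coef mR f mSDl mSDr DvE).
Qed.
End MorphismObstruction.

Unset Implicit Arguments.

Theorem lemma5p1 (K : fieldType) (R S : lmodType K)
  (mR : R -> R -> R) (mS : S -> S -> S) (f : R -> S) (N : nat)
  (mRs : nat -> R -> R -> R) (mSs : nat -> S -> S -> S) (fs : nat -> R -> S) :
  zinbiel_algebra mR -> zinbiel_algebra mS -> zinbiel_morphism mR mS f ->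
  (0 < N)%N ->
  zinb_deformation mR mS f N mRs mSs fs ->
  let ObR := obs_alg mRs N in
  let ObS := obs_alg mSs N in
  let Obf := obs_mor mRs mSs fs N in
  [/\ (forall x y z w : R, zd3 mR mR mR ObR x y z w = 0),
      (forall x y z w : S, zd3 mS mS mS ObS x y z w = 0)
    & (forall x y z : R,
         f (ObR x y z) - ObS (f x) (f y) (f z)
         - zd2 mR (fun r s => mS (f r) s) (fun s r => mS s (f r)) Obf x y z
         = 0)].
Proof.
(* The Zinbiel and morphism hypotheses are the deformation equations for n = 0;
   the cocycle property holds for N = 0 as well. *)
move=> _ _ _ _ [[<- <- <-] [lin defR defS deff]] ObR ObS Obf.
have linR i (iN : (i <= N)%N) : kbilinear (mRs i) by case: (lin i iN).
have linS i (iN : (i <= N)%N) : kbilinear (mSs i) by case: (lin i iN).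
have linf i (iN : (i <= N)%N) : klinear (fs i) by case: (lin i iN).
split.
- exact: zd3_obs_alg linR defR.
- exact: zd3_obs_alg linS defS.
- exact: zd2_obs_mor linR linS linf defR defS deff.
Qed.
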